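(* Let $N,h\in\mathbb{N}$, let $\mathcal{T}$ be an $(N,h)$-regular rooted tree, let $\mathcal{S}\subset\mathcal{T}$ be a subtree, and let $1\le m\le N$ be an integer. Suppose that for every $(m,h)$-regular subtree $\mathcal{R}$ of $\mathcal{T}$, $\mathcal{S}_h\cap\mathcal{R}_h\neq\emptyset$. Then $\mathcal{S}$ has an $(N-m+1,h)$-regular subtree.
   Context: A rooted tree is a connected graph without cycles with a distinguished vertex (the root), identified with its vertex set. The height of a vertex is the length of the unique path from the root; for a rooted tree $\mathcal{T}$, $\mathcal{T}_n$ denotes the set of vertices of height $n$. A successor of a vertex $\tau'$ is a vertex adjacent to $\tau'$ of height one greater. A subtree of $\mathcal{T}$ means a subset of vertices containing the root and closed under taking predecessors. A finite rooted tree is $(N,h)$-regular if it has no vertices of height $h+1$ and every vertex of height less than $h$ has exactly $N$ successors. *)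

From mathcomp Require Import all_boot.
Set Implicit Arguments. Unset Strict Implicit. Unset Printing Implicit Defensive.

(* Model of the (N,h)-regular rooted tree T: vertices are words w : seq 'I_N
   of length <= h.  The root is [::], the successors of w are the words i :: w
   (i : 'I_N), hence the predecessor of a non-root vertex w is behead w and
   the height of w is size w.  Every (N,h)-regular rooted tree is isomorphic
   to this one. *)
Definition regtree (N h : nat) : pred (seq 'I_N) := fun w => size w <= h.

Definition is_subtree (N : nat) (A B : pred (seq 'I_N)) : Prop :=
  [/\ B [::], (forall w, B w -> A w) & (forall w, B w -> B (behead w))].

Definition regular (N : nat) (k h : nat) (B : pred (seq 'I_N)) : Prop :=
  (forall w, B w -> size w != h.+1) /\
  (forall w, B w -> size w < h -> #|[pred i : 'I_N | B (i :: w)]| = k).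
Arguments regtree : clear implicits.

From mathcomp Require Import all_boot zify.
Set Implicit Arguments. Unset Strict Implicit.

(* Fix k := N - m + 1 and call a vertex w of S "k-rich" if the
   part of S above w contains a (k, h - |w|)-regular tree rooted at w; this is
   computed by recursion on h - |w|: a vertex of height >= h is rich iff it
   lies in S, and a lower vertex is rich iff it lies in S and has at least k
   rich successors.  A non-rich ("poor") vertex of height < h then has at
   least m = N - k + 1 poor successors: either fewer than k of its N
   successors are rich, or it is outside S and so are all its successors.
   A pruning construction turns any family of words containing the root, in
   which every vertex of height < h has at least c successors, into a
   (c,h)-regular subtree of it.  If the root is rich, pruning the rich
   vertices gives the required (N-m+1,h)-regular subtree of S.  If the root
   is poor, pruning the poor vertices gives an (m,h)-regular subtree R of T;
   by hypothesis R meets S at height h, but a poor vertex of height h is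
   outside S, a contradiction. *)

Lemma is_subtree_widen N (A A' B : pred (seq 'I_N)) :
  (forall w, A w -> A' w) -> is_subtree A B -> is_subtree A' B.
Proof. by move=> AA' [B0 BA Bb]; split=> // w /BA /AA'. Qed.

Section Pruning.
Variables (N : nat) (P : pred (seq 'I_N)) (c h : nat).
Hypothesis P_root : P [::].
Hypothesis P_branching :
  forall w, P w -> size w < h -> c <= #|[pred i : 'I_N | P (i :: w)]|.

Fixpoint prune (w : seq 'I_N) : bool :=
  match w with
  | [::] => true
  | i :: w' => [&& prune w', size w' < h &
                  i \in take c (enum [pred j : 'I_N | P (j :: w')])]
  end.

Lemma prune_inv w : prune w -> P w && (size w <= h).
Proof.
elim: w => [|i w IH] /=; first by rewrite P_root.
case/and3P=> /IH /andP[_ _] lt_w_h /mem_take.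
by rewrite mem_enum inE => ->.
Qed.

Lemma prune_subtree : is_subtree P prune.
Proof.
split=> //; first by move=> w /prune_inv /andP[].
by case=> [|i w] //= /and3P[].
Qed.

Lemma prune_subtree_regtree : is_subtree (regtree N h) prune.
Proof.
split=> //; last by case: prune_subtree.
by move=> w /prune_inv /andP[].
Qed.

Lemma prune_regular : regular c h prune.
Proof.
split=> [w /prune_inv /andP[_ le_w_h]|w prune_w lt_w_h].
  by rewrite neq_ltn ltnS le_w_h.
have /andP[Pw _] := prune_inv prune_w.
rewrite (@eq_card _ _ (mem (take c (enum [pred j : 'I_N | P (j :: w)])))).
  by rewrite (card_uniqP _) ?take_uniq ?enum_uniq // size_takel // -cardE
             P_branching.
by move=> i; rewrite !inE /= prune_w lt_w_h.
Qed.
End Pruning.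

Section Richness.
Variables (N : nat) (S : pred (seq 'I_N)) (k h : nat).

(* [rich_at n w]: the part of S above w contains a (k,n)-regular tree rooted
   at w. *)
Fixpoint rich_at (n : nat) (w : seq 'I_N) : bool :=
  match n with
  | 0 => S w
  | n.+1 => S w && (k <= #|[pred i : 'I_N | rich_at n (i :: w)]|)
  end.

Definition rich (w : seq 'I_N) : bool := rich_at (h - size w) w.

Lemma rich_S w : rich w -> S w.
Proof. by rewrite /rich; case: (h - size w) => //= n /andP[]. Qed.

Lemma rich_top w : size w = h -> rich w = S w.
Proof. by rewrite /rich => ->; rewrite subnn. Qed.

Lemma richE w : size w < h ->
  rich w = S w && (k <= #|[pred i : 'I_N | rich (i :: w)]|).
Proof.
rewrite /rich -subn_gt0; case E: (h - size w) => [|n] //= _.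
congr (_ && (_ <= _)); apply: eq_card => i; rewrite !inE /=.
by rewrite subnS E.
Qed.

Lemma poor_branching m :
  k + m = N.+1 -> m <= N -> (forall w, S w -> S (behead w)) ->
  forall w, ~~ rich w -> size w < h ->
  m <= #|[pred i : 'I_N | ~~ rich (i :: w)]|.
Proof.
move=> km mN S_closed w poor_w lt_w_h.
set rich_succ := [pred i : 'I_N | rich (i :: w)].
have card_split := cardC rich_succ; rewrite card_ord in card_split.
have -> : #|[pred i : 'I_N | ~~ rich (i :: w)]| = #|[predC rich_succ]|.
  by apply: eq_card => i; rewrite !inE.
move: card_split poor_w; rewrite richE //.
set n_rich := #|rich_succ|; set n_poor := #|[predC rich_succ]|.
case Sw: (S w) => /= card_split few_rich.
  by rewrite -ltnNge in few_rich; lia.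
have no_rich : n_rich = 0.
  apply: eq_card0 => i; rewrite !inE /=.
  by apply/negbTE/negP => /rich_S /S_closed /=; rewrite Sw.
by lia.
Qed.
End Richness.

Theorem lemma2p2 (N h m : nat) (S : pred (seq 'I_N)) :
  is_subtree (regtree N h) S ->
  1 <= m <= N ->
  (forall R : pred (seq 'I_N),
      is_subtree (regtree N h) R -> regular m h R ->
      exists w, [/\ size w = h, S w & R w]) ->
  exists Q : pred (seq 'I_N), is_subtree S Q /\ regular (N - m + 1) h Q.
Proof.
move=> [_ _ S_closed] /andP[m_gt0 mN] meets_S.
set k := N - m + 1; have km : k + m = N.+1 by lia.
case root_rich: (rich S k h [::]).
  have rich_branching w : rich S k h w -> size w < h ->
      k <= #|[pred i : 'I_N | rich S k h (i :: w)]|.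
    by move=> rich_w lt_w_h; move: rich_w; rewrite richE // => /andP[].
  exists (prune (rich S k h) k h); split.
    exact: is_subtree_widen (@rich_S _ _ _ _) (prune_subtree k h root_rich).
  exact: prune_regular root_rich rich_branching.
have root_poor : ~~ rich S k h [::] by rewrite root_rich.
have [w [hw Sw /(prune_inv root_poor) /andP[poor_w _]]] := meets_S _
  (prune_subtree_regtree m h root_poor)
  (prune_regular root_poor (poor_branching km mN S_closed)).
by move: poor_w; rewrite rich_top // Sw.
Qed.
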